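(* In the setting of the context, there exist $\bar k_\Psi\in\mathbb N$ and $\alpha_\Psi>0$ such that for every integer $k\ge\bar k_\Psi$, $\|\Psi^{(k)}\|_F\le\alpha_\Psi\,\|H^{(k)}_O\|_F\,\|H^{(k)}\|_F$, where $H^{(k)}:=Z^{(k)}-Z_\star$.
   Context: $\mathbb S^n$: real symmetric matrices, trace inner product, Frobenius norm; $\Pi_{\mathbb S^n_+}$ the projection onto the PSD cone. SDP pair: min $\langle C,X\rangle$ s.t. $\mathcal AX=b$, $X\succeq0$ / max $b^\top y$ s.t. $\mathcal A^*y+S=C$, $S\succeq0$, with $C,A_i\in\mathbb S^n$, $\mathcal AX=(\langle A_i,X\rangle)_i$ surjective, $\mathcal A^*y=\sum y_iA_i$, and a nonempty set of KKT points (primal–dual feasible with $\langle X,S\rangle=0$). $\mathcal P=\mathcal A^*(\mathcal A\mathcal A^* )^{-1}\mathcal A$. One-step ADMM with $\sigma>0$: $Z^{(k+1)}=\mathcal P(-2\Pi_{\mathbb S^n_+}(Z^{(k)})+Z^{(k)})+\Pi_{\mathbb S^n_+}(Z^{(k)})+\mathcal A^*(\mathcal A\mathcal A^* )^{-1}b+\sigma\mathcal PC-\sigma C$. Assume $Z^{(k)}\to Z_\star=X_\star-\sigma S_\star$ with $(X_\star,y_\star,S_\star)$ a KKT point satisfying $\operatorname{rank}X_\star+\operatorname{rank}S_\star=n$. Then $Z_\star=Q_\star\operatorname{diag}(\lambda_1,\dots,\lambda_n)Q_\star^\top$ for an orthogonal $Q_\star$, $\lambda_1\ge\dots\ge\lambda_r>0>\lambda_{r+1}\ge\dots\ge\lambda_n$,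 $r=\operatorname{rank}X_\star$. $\Theta_{ij}=\lambda_j/(\lambda_j-\lambda_{i+r})$ ($i\in[n-r],j\in[r]$), $\Omega=\begin{pmatrix}E_r&\Theta^\top\\\Theta&0\end{pmatrix}$, $\mathcal D(H)=Q_\star(\Omega\circ(Q_\star^\top HQ_\star))Q_\star^\top$ ($\circ$ Hadamard). $\Psi^{(k)}:=(\mathrm{Id}-2\mathcal P)\big(\Pi_{\mathbb S^n_+}(Z^{(k)})-\Pi_{\mathbb S^n_+}(Z_\star)-\mathcal D(Z^{(k)}-Z_\star)\big)$. For $H\in\mathbb S^n$, $H_O\in\mathbb R^{(n-r)\times r}$ denotes the lower-left block of $Q_\star^\top HQ_\star=\begin{pmatrix}H_X&H_O^\top\\H_O&H_S\end{pmatrix}$. *)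

From HB Require Import structures.
From mathcomp Require Import all_boot all_order all_algebra.
From mathcomp Require Import boolp classical_sets reals.
Set Implicit Arguments. Unset Strict Implicit. Unset Printing Implicit Defensive.
Import Order.TTheory GRing.Theory Num.Theory.
Local Open Scope ring_scope.

Section SDPDefs.
Variable R : realType.

Definition trip (n : nat) (A B : 'M[R]_n) : R := \tr (A^T *m B).

Definition fro (p q : nat) (A : 'M[R]_(p, q)) : R :=
  Num.sqrt (\sum_(i < p) \sum_(j < q) A i j ^+ 2).

Definition symmx (n : nat) (A : 'M[R]_n) : Prop := A^T = A.

Definition psd (n : nat) (A : 'M[R]_n) : Prop :=
  symmx A /\ forall x : 'cV[R]_n, 0 <= (x^T *m A *m x) 0 0.

Definition proj_psd (n : nat) (A : 'M[R]_n) : 'M[R]_n :=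
  xget 0 (fun X : 'M[R]_n => psd X /\
            forall Y : 'M[R]_n, psd Y -> fro (A - X) <= fro (A - Y)).

Definition opA (n m : nat) (As : 'I_m -> 'M[R]_n) (X : 'M[R]_n) : 'cV[R]_m :=
  \col_i trip (As i) X.
Definition opAadj (n m : nat) (As : 'I_m -> 'M[R]_n) (y : 'cV[R]_m) : 'M[R]_n :=
  \sum_(i < m) y i 0 *: As i.
(* calA calA^* as an m x m matrix *)
Definition gram (n m : nat) (As : 'I_m -> 'M[R]_n) : 'M[R]_m :=
  \matrix_(i, j) trip (As i) (As j).
Definition projP (n m : nat) (As : 'I_m -> 'M[R]_n) (H : 'M[R]_n) : 'M[R]_n :=
  opAadj As (invmx (gram As) *m opA As H).

Definition surjective_opA (n m : nat) (As : 'I_m -> 'M[R]_n) : Prop :=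
  forall v : 'cV[R]_m, exists X : 'M[R]_n, symmx X /\ opA As X = v.

Definition KKT (n m : nat) (As : 'I_m -> 'M[R]_n) (b : 'cV[R]_m) (C : 'M[R]_n)
  (X : 'M[R]_n) (y : 'cV[R]_m) (S : 'M[R]_n) : Prop :=
  [/\ opA As X = b, psd X, opAadj As y + S = C, psd S & trip X S = 0].

Definition admm_step (n m : nat) (As : 'I_m -> 'M[R]_n) (b : 'cV[R]_m)
  (C : 'M[R]_n) (sigma : R) (Z : 'M[R]_n) : 'M[R]_n :=
  projP As (- (2%:R *: proj_psd Z) + Z) + proj_psd Z
  + opAadj As (invmx (gram As) *m b) + sigma *: projP As C - sigma *: C.

(* Omega = [[E_r, Theta^T],[Theta, 0]] with
   Theta_{ij} = lambda_j / (lambda_j - lambda_{i+r}), written on indices of 'I_n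
   (0-based: the first block is the indices i < r). *)
Definition Omega (n r : nat) (lam : 'I_n -> R) : 'M[R]_n :=
  \matrix_(i, j)
    if (i < r)%N then
      (if (j < r)%N then 1 else lam i / (lam i - lam j))
    else
      (if (j < r)%N then lam j / (lam j - lam i) else 0).

Definition calD (n r : nat) (Q : 'M[R]_n) (lam : 'I_n -> R) (H : 'M[R]_n)
  : 'M[R]_n :=
  Q *m map2_mx *%R (Omega r lam) (Q^T *m H *m Q) *m Q^T.

Definition fro_HO (n r : nat) (Q : 'M[R]_n) (H : 'M[R]_n) : R :=
  let M := Q^T *m H *m Q in
  Num.sqrt (\sum_(i < n | (r <= i)%N) \sum_(j < n | (j < r)%N) M i j ^+ 2).

Definition Psi (n m r : nat) (As : 'I_m -> 'M[R]_n) (Q : 'M[R]_n)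
  (lam : 'I_n -> R) (Zs Zk : 'M[R]_n) : 'M[R]_n :=
  let W := proj_psd Zk - proj_psd Zs - calD r Q lam (Zk - Zs) in
  W - 2%:R *: projP As W.

End SDPDefs.

From HB Require Import structures.
From mathcomp Require Import all_boot all_order all_algebra.
From mathcomp Require Import boolp classical_sets reals.
From mathcomp Require Import topology normedtype derive.
From mathcomp Require Import ring lra.
Import Order.TTheory GRing.Theory Num.Theory.
Import numFieldNormedType.Exports.
Local Open Scope ring_scope.

Set Implicit Arguments.
Unset Strict Implicit.
Unset Printing Implicit Defensive.

(* Let X := Π(Z) be the projection onto the PSD cone, Λ = Λ₊ - Λ₋ the spectrum of
   Z_⋆ in the basis Q, E := Qᵀ (X - X_⋆) Q and H := Qᵀ (Z - Z_⋆) Q.  Projections onto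
   the PSD cone satisfy X (X - Z) = 0, which in the basis Q reads
   (Λ₊ + E)(Λ₋ + E - H) = 0, i.e. entrywise
     λ₊_i (E - H)_ij + E_ij λ₋_j + (E (E - H))_ij = 0.
   Strict complementarity keeps every |λ_i| above some δ > 0, so solving this identity
   on each of the X-X, X-S and S-S blocks bounds the block of E - Ω∘H by the quadratic
   term E (E - H) divided by δ.  Nonexpansiveness of Π makes E as small as H, and the
   X-S block of E is itself controlled by H_O; hence E - Ω∘H = O(‖H‖ ‖H_O‖).
   Conjugating back by Q and applying the bounded linear map Id - 2P bounds Ψ. *)

(** * Entrywise norms *)

Section EntrywiseNorms.
Variables (R : realType) (p q : nat).
Implicit Types M N P : 'M[R]_(p, q).

Definition fro_dot M N := \sum_i \sum_j M i j * N i j.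
Definition fro2 M := \sum_i \sum_j M i j ^+ 2.

Lemma froE M : fro M = Num.sqrt (fro2 M).
Proof. by []. Qed.

Lemma fro2_ge0 M : 0 <= fro2 M.
Proof. by apply: sumr_ge0 => i _; apply: sumr_ge0 => j _; exact: sqr_ge0. Qed.

Lemma fro2_entry M i j : M i j ^+ 2 <= fro2 M.
Proof.
rewrite /fro2 (bigD1 i) //= (bigD1 j) //= -addrA lerDl.
apply: addr_ge0; first by apply: sumr_ge0 => k _; exact: sqr_ge0.
by apply: sumr_ge0 => k _; apply: sumr_ge0 => l _; exact: sqr_ge0.
Qed.

Lemma fro_entry M i j : `|M i j| <= fro M.
Proof. by rewrite froE -sqrtr_sqr ler_sqrt ?fro2_ge0 ?fro2_entry. Qed.

Lemma fro2_le0 M : fro2 M <= 0 -> M = 0.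
Proof.
move=> M0; have /eqP : fro2 M = 0 by apply/eqP; rewrite eq_le M0 fro2_ge0.
rewrite psumr_eq0 => [/allP M0'|i _]; last by apply: sumr_ge0 => j _; exact: sqr_ge0.
apply/matrixP => i j; move/(_ i (mem_index_enum _)): M0'.
rewrite psumr_eq0 => [/allP/(_ j (mem_index_enum _))|k _]; last exact: sqr_ge0.
by rewrite /= sqrf_eq0 mxE => /eqP.
Qed.

Lemma fro_dotC M N : fro_dot M N = fro_dot N M.
Proof. by apply: eq_bigr => i _; apply: eq_bigr => j _; rewrite mulrC. Qed.

Lemma fro_dotDr M N P : fro_dot M (N + P) = fro_dot M N + fro_dot M P.
Proof.
rewrite /fro_dot -big_split; apply: eq_bigr => i _; rewrite -big_split.
by apply: eq_bigr => j _; rewrite mxE mulrDr.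
Qed.

Lemma fro_dotZr M N a : fro_dot M (a *: N) = a * fro_dot M N.
Proof.
rewrite /fro_dot mulr_sumr; apply: eq_bigr => i _; rewrite mulr_sumr.
by apply: eq_bigr => j _; rewrite mxE mulrCA.
Qed.

Lemma fro_dotNr M N : fro_dot M (- N) = - fro_dot M N.
Proof. by rewrite -scaleN1r fro_dotZr mulN1r. Qed.

Lemma fro_dotBr M N P : fro_dot M (N - P) = fro_dot M N - fro_dot M P.
Proof. by rewrite fro_dotDr fro_dotNr. Qed.

Lemma fro_dotBl M N P : fro_dot (N - P) M = fro_dot N M - fro_dot P M.
Proof. by rewrite fro_dotC fro_dotBr ![fro_dot M _]fro_dotC. Qed.

Lemma fro_dotDl M N P : fro_dot (M + N) P = fro_dot M P + fro_dot N P.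
Proof. by rewrite fro_dotC fro_dotDr !(fro_dotC P). Qed.

Lemma fro2_dot M : fro2 M = fro_dot M M.
Proof. by apply: eq_bigr => i _; apply: eq_bigr => j _; rewrite expr2. Qed.

Lemma fro2Z M a : fro2 (a *: M) = a ^+ 2 * fro2 M.
Proof. by rewrite !fro2_dot fro_dotZr fro_dotC fro_dotZr mulrA -expr2. Qed.

Lemma fro2B M N : fro2 (M - N) = fro2 M - 2 * fro_dot M N + fro2 N.
Proof. by rewrite !fro2_dot fro_dotBl !fro_dotBr (fro_dotC N M); ring. Qed.

Lemma fro2D M N : fro2 (M + N) = fro2 M + 2 * fro_dot M N + fro2 N.
Proof. by rewrite !fro2_dot fro_dotDl !fro_dotDr (fro_dotC N M); ring. Qed.

Lemma fro20 : fro2 0 = 0.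
Proof. by rewrite /fro2 big1 // => i _; rewrite big1 // => j _; rewrite mxE expr0n. Qed.

Lemma fro_dot_trace M N : fro_dot M N = \tr (M^T *m N).
Proof.
rewrite /fro_dot /mxtrace exchange_big; apply: eq_bigr => j _.
by rewrite mxE; apply: eq_bigr => i _; rewrite mxE.
Qed.

Definition l1norm M := \sum_i \sum_j `|M i j|.

Lemma l1norm_ge0 M : 0 <= l1norm M.
Proof. by apply: sumr_ge0 => i _; apply: sumr_ge0. Qed.

Lemma l1norm0 : l1norm 0 = 0.
Proof. by rewrite /l1norm big1 // => i _; rewrite big1 // => j _; rewrite mxE normr0. Qed.

Lemma l1norm_entry M i j : `|M i j| <= l1norm M.
Proof.
rewrite /l1norm (bigD1 i) //= (bigD1 j) //= -addrA lerDl.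
by apply: addr_ge0; apply: sumr_ge0 => // k _; apply: sumr_ge0.
Qed.

Lemma l1normD M N : l1norm (M + N) <= l1norm M + l1norm N.
Proof.
rewrite /l1norm -big_split; apply: ler_sum => i _; rewrite -big_split.
by apply: ler_sum => j _; rewrite mxE ler_normD.
Qed.

Lemma l1normZ M a : l1norm (a *: M) = `|a| * l1norm M.
Proof.
rewrite /l1norm mulr_sumr; apply: eq_bigr => i _; rewrite mulr_sumr.
by apply: eq_bigr => j _; rewrite mxE normrM.
Qed.

Lemma l1normN M : l1norm (- M) = l1norm M.
Proof. by rewrite -scaleN1r l1normZ normrN1 mul1r. Qed.

Lemma l1normB M N : l1norm (M - N) <= l1norm M + l1norm N.
Proof. by rewrite -(l1normN N) l1normD. Qed.

Lemma l1norm_sum (I : finType) (F : I -> 'M[R]_(p, q)) :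
  l1norm (\sum_i F i) <= \sum_i l1norm (F i).
Proof.
elim/big_rec2: _ => [|i y1 y2 _ h]; first by rewrite l1norm0.
by apply: le_trans (l1normD _ _) _; rewrite lerD2l.
Qed.

Lemma fro_le_l1norm M : fro M <= l1norm M.
Proof.
rewrite froE -(ger0_norm (l1norm_ge0 M)) -sqrtr_sqr ler_sqrt ?sqr_ge0 // expr2.
rewrite {1}/l1norm mulr_suml; apply: ler_sum => i _.
rewrite mulr_suml; apply: ler_sum => j _.
by rewrite -real_normK ?num_real // expr2 ler_pM ?l1norm_entry.
Qed.

Lemma l1norm_le_entry_bound M c :
  (forall i j, `|M i j| <= c) -> l1norm M <= (p * q)%:R * c.
Proof.
move=> Mc; apply: le_trans (ler_sum _ (fun i _ => ler_sum _ (fun j _ => Mc i j))) _.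
under eq_bigr do rewrite sumr_const card_ord.
by rewrite sumr_const card_ord -mulrnA mulnC mulr_natl.
Qed.

Lemma l1norm_le_fro M : l1norm M <= (p * q)%:R * fro M.
Proof. exact/l1norm_le_entry_bound/fro_entry. Qed.

End EntrywiseNorms.

Lemma l1norm_mul (R : realType) (p q s : nat) (M : 'M[R]_(p, q)) (N : 'M[R]_(q, s)) :
  l1norm (M *m N) <= l1norm M * l1norm N.
Proof.
have -> : l1norm M * l1norm N = \sum_i \sum_k `|M i k| * l1norm N.
  by rewrite mulr_suml; apply: eq_bigr => i _; rewrite mulr_suml.
apply: ler_sum => i _; rewrite /l1norm.
apply: le_trans (_ : _ <= \sum_j \sum_k `|M i k| * `|N k j|) _.
  apply: ler_sum => j _; rewrite mxE; apply: le_trans (ler_norm_sum _ _ _) _.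
  by apply: ler_sum => k _; rewrite normrM.
rewrite exchange_big; apply: ler_sum => k _; rewrite -mulr_sumr.
apply: ler_wpM2l => //; rewrite [leRHS](bigD1 k) //= lerDl.
by apply: sumr_ge0 => l _; apply: sumr_ge0.
Qed.

Lemma l1norm_mul3 (R : realType) (p q s t : nat) (A : 'M[R]_(p, q)) (M : 'M[R]_(q, s))
    (B : 'M[R]_(s, t)) :
  l1norm (A *m M *m B) <= l1norm A * l1norm M * l1norm B.
Proof.
apply: le_trans (l1norm_mul _ _) _; apply: ler_wpM2r; first exact: l1norm_ge0.
exact: l1norm_mul.
Qed.

Lemma l1norm_tr (R : realType) (p q : nat) (M : 'M[R]_(p, q)) : l1norm M^T = l1norm M.
Proof.
by rewrite /l1norm exchange_big; apply: eq_bigr => i _; apply: eq_bigr => j _; rewrite mxE.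
Qed.

(** * Nearest points and the projection onto the PSD cone *)

Lemma le0_of_le_vanishing (R : realType) (a b : R) :
  (forall t, 0 < t <= 1 -> a <= t * b) -> a <= 0.
Proof.
move=> h; rewrite leNgt; apply/negP => a0.
pose t := a / (a + `|b| + 1).
have b0 := normr_ge0 b.
have d0 : 0 < a + `|b| + 1 by lra.
have t0 : 0 < t by rewrite divr_gt0.
have t1 : t <= 1 by rewrite ler_pdivrMr // mul1r; lra.
have := h t; rewrite t0 t1 => /(_ isT) atb.
have : t * b <= t * `|b| by rewrite ler_pM2l // ler_norm.
have : t * `|b| < a by rewrite /t mulrAC ltr_pdivrMr //; nra.
lra.
Qed.

Lemma eq0_of_quadratic_le0 (R : realType) (b c : R) :
  (forall t, t * b + t ^+ 2 * c <= 0) -> b = 0.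
Proof.
move=> h.
have le_b0 (s : R) : (forall t, 0 < t -> t * (s * b) + t ^+ 2 * c <= 0) -> s * b <= 0.
  move=> hs; apply: (@le0_of_le_vanishing _ _ (- c)) => t /andP[t0 _].
  by have := hs t t0; rewrite expr2 => hst; rewrite -(ler_pM2l t0); nra.
have bN : b <= 0 by rewrite -[b]mul1r; apply: le_b0 => t _; rewrite mul1r.
have bP : - 1 * b <= 0.
  by apply: le_b0 => t _; have := h (- t); rewrite sqrrN; nra.
lra.
Qed.

Section NearestPoint.
Variables (R : realType) (p q : nat).
Implicit Types A X Y W : 'M[R]_(p, q).

Definition nearest (K : set 'M[R]_(p, q)) A X :=
  K X /\ forall Y, K Y -> fro2 (A - X) <= fro2 (A - Y).

Variable K : set 'M[R]_(p, q).
Hypothesis K_convex :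
  forall X W t, K X -> K W -> 0 <= t <= 1 -> K (X + t *: (W - X)).

Lemma nearest_VI A X : nearest K A X -> forall W, K W -> fro_dot (A - X) (W - X) <= 0.
Proof.
move=> [KX Xmin] W KW.
suff : 2 * fro_dot (A - X) (W - X) <= 0 by rewrite pmulr_rle0.
apply: (@le0_of_le_vanishing _ _ (fro2 (W - X))) => t /andP[t0 t1].
have t01 : 0 <= t <= 1 by rewrite ltW.
have := Xmin _ (K_convex KX KW t01).
rewrite opprD addrA [fro2 (A - X - _)]fro2B fro_dotZr fro2Z => hX.
have : 0 <= t * (t * fro2 (W - X) - 2 * fro_dot (A - X) (W - X)) by lra.
by rewrite pmulr_rge0 // subr_ge0.
Qed.

Lemma VI_nearest A X :
  K X -> (forall W, K W -> fro_dot (A - X) (W - X) <= 0) -> nearest K A X.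
Proof.
move=> KX hX; split => // Y KY.
have -> : A - Y = (A - X) - (Y - X) by rewrite opprB addrA subrK.
by rewrite [fro2 (_ - (Y - X))]fro2B; have := hX Y KY; have := fro2_ge0 (Y - X); lra.
Qed.

Lemma nearest_nonexpansive A B XA XB :
  nearest K A XA -> nearest K B XB -> fro2 (XA - XB) <= fro2 (A - B).
Proof.
move=> hA hB.
have := nearest_VI hA (proj1 hB); rewrite -(opprB XA XB) fro_dotNr => VA.
have VB := nearest_VI hB (proj1 hA).
have -> : A - B = (A - XA - (B - XB)) + (XA - XB).
  by apply/matrixP => i j; rewrite !mxE; ring.
by rewrite [fro2 (_ + (XA - XB))]fro2D fro_dotBl; have := fro2_ge0 (A - XA - (B - XB)); lra.
Qed.

Lemma nearest_unique A X1 X2 : nearest K A X1 -> nearest K A X2 -> X1 = X2.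
Proof.
move=> h1 h2; apply/eqP; rewrite -subr_eq0; apply/eqP/fro2_le0.
by have := nearest_nonexpansive h1 h2; rewrite subrr fro20.
Qed.

End NearestPoint.

Section PsdCone.
Variables (R : realType) (n : nat).
Implicit Types A S X W : 'M[R]_n.

Lemma psd_convex X W t : psd X -> psd W -> 0 <= t <= 1 -> psd (X + t *: (W - X)).
Proof.
move=> [sX pX] [sW pW] /andP[t0 t1]; split.
  by rewrite /symmx linearD /= linearZ /= linearB /= sX sW.
move=> x; have -> : X + t *: (W - X) = (1 - t) *: X + t *: W.
  by rewrite scalerBr scalerBl scale1r addrA addrAC.
rewrite mulmxDr mulmxDl -!scalemxAr -!scalemxAl [(_ + _ : 'M_1) 0 0]mxE.
rewrite 2![(_ *: _ : 'M_1) 0 0]mxE.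
by apply: addr_ge0; apply: mulr_ge0; rewrite ?subr_ge0.
Qed.

Lemma psd_conj S X : psd X -> psd (S *m X *m S^T).
Proof.
move=> [sX pX]; split; first by rewrite /symmx !trmx_mul trmxK sX mulmxA.
by move=> x; have := pX (S^T *m x); rewrite trmx_mul trmxK !mulmxA.
Qed.

(* S := (X N)ᵀ keeps (1 + t S) X (1 + t S)ᵀ in the cone; the variational inequality,
   quadratic in t, forces its linear coefficient 2 ‖X N‖² to vanish. *)
Lemma nearest_psd_compl A X : symmx A -> nearest (@psd R n) A X -> X *m (X - A) = 0.
Proof.
move=> sA hX; have [[sX pX] _] := hX.
set N := A - X; have sN : N^T = N by rewrite /N linearB /= sA sX.
suff XN0 : X *m N = 0 by rewrite -(opprB A X) mulmxN -/N XN0 oppr0.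
set S := (X *m N)^T.
have quad t : t * fro_dot N (S *m X + X *m S^T) + t ^+ 2 * fro_dot N (S *m X *m S^T) <= 0.
  have := nearest_VI psd_convex hX (psd_conj (1%:M + t *: S) (conj sX pX)).
  have -> : (1%:M + t *: S) *m X *m (1%:M + t *: S)^T - X =
            t *: (S *m X + X *m S^T) + t ^+ 2 *: (S *m X *m S^T).
    rewrite linearD /= trmx1 linearZ /= !mulmxDl !mulmxDr !mul1mx !mulmx1.
    rewrite -!scalemxAl -!scalemxAr scalerA -expr2 scalerDr.
    by apply/matrixP => i j; rewrite !mxE; ring.
  by rewrite fro_dotDr !fro_dotZr.
have := eq0_of_quadratic_le0 quad; rewrite fro_dotDr !fro_dot_trace sN.
rewrite mxtrace_mulC -[X in _ + X = _]mxtrace_tr !trmx_mul trmxK sN sX.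
rewrite -mulr2n => /eqP; rewrite mulrn_eq0 /= -mulmxA -[S]trmxK -fro_dot_trace.
by rewrite /S trmxK -fro2_dot => /eqP XN; apply: fro2_le0; rewrite XN.
Qed.

End PsdCone.

Section NearestPsdExists.
Local Open Scope classical_set_scope.
Variable R : realType.

Lemma closed_forall_preimage (T U : topologicalType) (I : Type)
    (f : I -> T -> U) (C : set U) :
  (forall i, continuous (f i)) -> closed C -> closed [set x | forall i, C (f i x)].
Proof.
move=> fc Cc; have -> : [set x | forall i, C (f i x)] = \bigcap_(i in setT) (f i @^-1` C).
  by apply/seteqP; split => x /= h i => [_|]; apply: h.
by apply: closed_bigI => i _; apply: preimage_closed => // x _; exact: fc.
Qed.

Lemma continuous_sum (T : topologicalType) (I : Type) (r : seq I) (F : I -> T -> R) :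
  (forall i, continuous (F i)) -> continuous (fun x => \sum_(i <- r) F i x).
Proof. by move=> Fc; apply: continuous_big => [|i _]; [exact: add_continuous|exact: Fc]. Qed.

(* Compactness of bounded closed sets is available for row vectors only, so the PSD
   cone is handled below through vec_mx. *)
Lemma exists_min_coercive k (f : 'rV[R]_k -> R) (S : set 'rV[R]_k) x0 :
  continuous f -> closed S -> S x0 ->
  (exists B, forall x, f x <= f x0 -> forall j, `|x 0 j| <= B) ->
  exists2 x, S x & forall y, S y -> f x <= f y.
Proof.
move=> fc Sc Sx0 [B fB].
pose K := S `&` [set x | f x <= f x0].
have Kx0 : K x0 by rewrite /K; split => /=.
have Kc : compact K.
  apply: bounded_closed_compact.
    exists (Num.max B 0); split; first exact: num_real.
    move=> M; rewrite gt_max => /andP[BM M0] v [_ /fB vB] /=.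
    rewrite [leLHS]/Num.norm /= mx_normrE; apply: bigmax_le => [|[i j] _].
      exact: ltW.
    by rewrite (ord1 i); apply: le_trans (vB j) (ltW BM).
  by apply: closedI => //; apply: (preimage_closed (D := [set y | y <= f x0]));
    [move=> x _; exact: fc | exact: closed_le].
have [c /set_mem [Sc' cx0] cmin] := compact_EVT_min (ex_intro _ x0 Kx0) Kc
  (continuous_subspaceT fc).
exists c => // y Sy; have [yx0|/ltW x0y] := leP (f y) (f x0).
  by apply: cmin; apply/mem_set.
exact: le_trans cx0 x0y.
Qed.

Variable n : nat.

Lemma continuous_vec_mx_entry i j :
  continuous (fun v : 'rV[R]_(n * n) => vec_mx v i j).
Proof.
have -> : (fun v : 'rV[R]_(n * n) => vec_mx v i j) = (fun v => v 0 (mxvec_index i j)).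
  by apply: funext => v; rewrite -{2}(vec_mxK v) mxvecE.
exact: coord_continuous.
Qed.

Lemma closed_psd : closed [set v : 'rV[R]_(n * n) | psd (vec_mx v)].
Proof.
have -> : [set v : 'rV[R]_(n * n) | psd (vec_mx v)] =
    [set v | forall ij : 'I_n * 'I_n, vec_mx v ij.1 ij.2 - vec_mx v ij.2 ij.1 = 0]
    `&` [set v | forall x : 'cV[R]_n, 0 <= (x^T *m vec_mx v *m x) 0 0].
  apply/seteqP; split => v /= [sv pv]; split => //.
    by move=> [i j] /=; rewrite -{1}sv mxE subrr.
  by apply/matrixP => i j; rewrite mxE; apply/eqP; rewrite -subr_eq0 (sv (j, i)).
apply: closedI.
  apply: (@closed_forall_preimage _ _ _
    (fun ij v => vec_mx v ij.1 ij.2 - vec_mx v ij.2 ij.1) [set y | y = 0]).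
    by move=> [i j] v; apply: continuousB; exact: continuous_vec_mx_entry.
  exact: closed_eq.
apply: (@closed_forall_preimage _ _ _
  (fun (x : 'cV[R]_n) (v : 'rV[R]_(n * n)) => (x^T *m vec_mx v *m x) 0 0)
  [set y | 0 <= y]); last exact: closed_ge.
move=> x; have -> : (fun v => (x^T *m vec_mx v *m x) 0 0) =
    (fun v => \sum_l \sum_k x k 0 * x l 0 * vec_mx v k l).
  apply/funext => v; rewrite !mxE; apply: eq_bigr => l _; rewrite !mxE big_distrl.
  by apply: eq_bigr => k _; rewrite !mxE mulrAC mulrC.
apply: continuous_sum => l; apply: continuous_sum => k v.
apply: (continuousM (s := fun=> x k 0 * x l 0) (t := fun v => vec_mx v k l)).
  exact: cst_continuous.
exact: continuous_vec_mx_entry.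
Qed.

Lemma exists_nearest_psd (A : 'M[R]_n) : exists X, nearest (@psd R n) A X.
Proof.
pose f v := fro2 (A - vec_mx v).
have fc : continuous f.
  apply: continuous_sum => i; apply: continuous_sum => j v.
  pose g v := A i j - vec_mx v i j.
  have gc : continuous g.
    move=> w; apply: (continuousB (f := fun=> A i j) (g := fun v => vec_mx v i j)).
      exact: cst_continuous.
    exact: continuous_vec_mx_entry.
  have -> : (fun v => (A - vec_mx v) i j ^+ 2) = g \* g.
    by apply: funext => w; rewrite /= /g 2!mxE expr2.
  by apply: continuousM; apply: gc.
have vec_mx0 : vec_mx (0 : 'rV[R]_(n * n)) = 0 by apply/eqP; rewrite vec_mx_eq0.
have f_coercive : exists B, forall v, f v <= f 0 -> forall k, `|v 0 k| <= B.
  exists (2 * fro A) => v; rewrite /f vec_mx0 subr0 => vA k.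
  have vA' : fro (A - vec_mx v) <= fro A by rewrite !froE ler_sqrt ?fro2_ge0.
  case/mxvec_indexP: k => i j; rewrite -{1}(vec_mxK v) mxvecE.
  have -> : vec_mx v i j = A i j - (A - vec_mx v) i j.
    by rewrite [(A - vec_mx v) i j]mxE [(- vec_mx v) i j]mxE opprB addrC subrK.
  apply: le_trans (ler_normB _ _) _; rewrite mulr2n mulrDl mul1r lerD ?fro_entry //.
  exact: le_trans (fro_entry _ i j) vA'.
have psd_vec0 : psd (vec_mx (0 : 'rV[R]_(n * n))).
  by rewrite vec_mx0; split=> [|x]; rewrite ?/symmx ?trmx0 // mulmx0 mul0mx mxE.
have [c psd_c cmin] := exists_min_coercive fc closed_psd psd_vec0 f_coercive.
exists (vec_mx c); split => // Y psdY.
by have := cmin (mxvec Y); rewrite /f /= mxvecK => /(_ psdY).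
Qed.

End NearestPsdExists.

Section ProjPsd.
Variables (R : realType) (n : nat).
Implicit Types A B X W : 'M[R]_n.

Lemma proj_psdP A : nearest (@psd R n) A (proj_psd A).
Proof.
pose P X := psd X /\ forall Y, psd Y -> fro (A - X) <= fro (A - Y).
have PE X : P X <-> nearest (@psd R n) A X.
  by split=> -[pX Xmin]; split=> // Y /Xmin; rewrite !froE ler_sqrt ?fro2_ge0.
have [X /PE PX] := exists_nearest_psd A.
exact/PE/(xgetPex 0 (ex_intro P X PX)).
Qed.

Lemma proj_psd_eq A X : nearest (@psd R n) A X -> proj_psd A = X.
Proof. exact: (nearest_unique (@psd_convex R n) (proj_psdP A)). Qed.

Lemma proj_psd_sym A : symmx (proj_psd A).
Proof. by case: (proj_psdP A) => -[]. Qed.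

Lemma proj_psd_compl A : symmx A -> proj_psd A *m (proj_psd A - A) = 0.
Proof. by move=> sA; apply: nearest_psd_compl sA (proj_psdP A). Qed.

Lemma proj_psd_nonexpansive A B : fro (proj_psd A - proj_psd B) <= fro (A - B).
Proof.
rewrite !froE ler_sqrt ?fro2_ge0 //.
exact: (nearest_nonexpansive (@psd_convex R n) (proj_psdP A) (proj_psdP B)).
Qed.

Lemma psd_diag_ge0 X i : psd X -> 0 <= X i i.
Proof.
case=> _ /(_ (delta_mx i 0)); rewrite trmx_delta -rowE -colE.
by rewrite !mxE.
Qed.

Lemma psd_diag_mx (d : 'rV[R]_n) : (forall i, 0 <= d 0 i) -> psd (diag_mx d).
Proof.
move=> d0; split=> [|x]; first exact: tr_diag_mx.
rewrite mul_mx_diag mxE; apply: sumr_ge0 => i _; rewrite !mxE.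
by rewrite mulrAC -expr2 mulr_ge0 ?sqr_ge0.
Qed.

Lemma fro_dot_conj (Q M N : 'M[R]_n) : fro_dot (Q *m M *m Q^T) N = fro_dot M (Q^T *m N *m Q).
Proof. by rewrite !fro_dot_trace !trmx_mul trmxK -!mulmxA mxtrace_mulC !mulmxA. Qed.

Lemma fro_dot_diag (d : 'rV[R]_n) M : fro_dot (diag_mx d) M = \sum_i d 0 i * M i i.
Proof.
rewrite fro_dot_trace tr_diag_mx mul_diag_mx /mxtrace.
by apply: eq_bigr => i _; rewrite mxE.
Qed.

Lemma conjmxK (P Q M : 'M[R]_n) : P *m Q = 1%:M -> P *m (Q *m M *m P) *m Q = M.
Proof. by move=> PQ; rewrite !mulmxA PQ mul1mx -mulmxA PQ mulmx1. Qed.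

Lemma proj_psd_spectral (Q : 'M[R]_n) (dp dn : 'I_n -> R) :
  Q^T *m Q = 1%:M -> (forall i, 0 <= dp i) -> (forall i, 0 <= dn i) ->
  (forall i, dp i * dn i = 0) ->
  proj_psd (Q *m diag_mx (\row_i (dp i - dn i)) *m Q^T) = Q *m diag_mx (\row_i dp i) *m Q^T.
Proof.
move=> QQ dp0 dn0 dpn0; apply: proj_psd_eq; apply: VI_nearest.
  by apply: psd_conj; apply: psd_diag_mx => i; rewrite mxE.
move=> W pW; rewrite -mulmxBl -mulmxBr -linearB /=.
have -> : \row_i (dp i - dn i) - \row_i dp i = \row_i - dn i.
  by apply/rowP => i; rewrite !mxE addrC addKr.
rewrite fro_dot_conj mulmxBr mulmxBl conjmxK // fro_dot_diag.
have := psd_conj Q^T pW; rewrite trmxK; set M := Q^T *m W *m Q => pM.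
clearbody M; apply: sumr_le0 => i _; rewrite !mxE eqxx mulr1n.
by have := dpn0 i; have := dn0 i; have := psd_diag_ge0 i pM; nra.
Qed.

End ProjPsd.

(** * Block estimates *)

Section Blocks.
Variables (R : realType) (n : nat).
Implicit Types (P Q : pred 'I_n) (A B C M N : 'M[R]_n).

Definition mxmask P Q M : 'M[R]_n := \matrix_(i, j) if P i && Q j then M i j else 0.
Definition l1block P Q M := l1norm (mxmask P Q M).

Lemma l1block_ge0 P Q M : 0 <= l1block P Q M.
Proof. exact: l1norm_ge0. Qed.

Lemma l1block_le P Q M : l1block P Q M <= l1norm M.
Proof.
apply: ler_sum => i _; apply: ler_sum => j _; rewrite mxE.
by case: (P i && Q j); rewrite ?normr0.
Qed.

Lemma l1blockB P Q M N : l1block P Q (M - N) <= l1block P Q M + l1block P Q N.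
Proof.
rewrite /l1block; have -> : mxmask P Q (M - N) = mxmask P Q M - mxmask P Q N.
  by apply/matrixP => i j; rewrite !mxE; case: (P i && Q j); rewrite ?subrr.
exact: l1normB.
Qed.

Lemma l1block_tr P Q M : l1block P Q M^T = l1block Q P M.
Proof.
rewrite /l1block /l1norm exchange_big; apply: eq_bigr => i _; apply: eq_bigr => j _.
by rewrite !mxE andbC.
Qed.

Lemma eq_l1block P Q M N :
  (forall i j, P i -> Q j -> M i j = N i j) -> l1block P Q M = l1block P Q N.
Proof.
move=> MN; apply: eq_bigr => i _; apply: eq_bigr => j _; rewrite !mxE.
by case: (boolP (P i)) => //= Pi; case: (boolP (Q j)) => //= Qj; rewrite MN.
Qed.

Lemma l1block_weighted P Q A B C (a b c : R) : 0 <= a -> 0 <= b -> 0 <= c ->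
  (forall i j, P i -> Q j -> a * `|A i j| <= b * `|B i j| + c * `|C i j|) ->
  a * l1block P Q A <= b * l1block P Q B + c * l1block P Q C.
Proof.
move=> a0 b0 c0 ABC; rewrite /l1block /l1norm !mulr_sumr -big_split.
apply: ler_sum => i _; rewrite !mulr_sumr -big_split; apply: ler_sum => j _.
rewrite !mxE; case: (boolP (P i)) => //= Pi; last by rewrite !normr0 !mulr0 addr0.
by case: (boolP (Q j)) => //= Qj; [exact: ABC | rewrite !normr0 !mulr0 addr0].
Qed.

Lemma l1block_scaled P Q A C (a : R) : 0 <= a ->
  (forall i j, P i -> Q j -> a * `|A i j| <= `|C i j|) ->
  a * l1block P Q A <= l1block P Q C.
Proof.
move=> a0 AC; have := @l1block_weighted P Q A A C a 0 1 a0 (lexx 0) ler01.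
rewrite mul0r add0r mul1r; apply=> i j Pi Qj; rewrite mul0r add0r mul1r; exact: AC.
Qed.

Variable r : nat.
Definition Xidx : pred 'I_n := fun i => (i < r)%N.
Definition Sidx : pred 'I_n := fun i => ~~ (i < r)%N.

Lemma l1block_mul P Q M N :
  l1block P Q (M *m N) <=
  l1block P Xidx M * l1block Xidx Q N + l1block P Sidx M * l1block Sidx Q N.
Proof.
rewrite /l1block; have -> : mxmask P Q (M *m N) =
    mxmask P Xidx M *m mxmask Xidx Q N + mxmask P Sidx M *m mxmask Sidx Q N.
  apply/matrixP => i j; rewrite !mxE -big_split /=.
  case: (P i && Q j) / boolP => PQ.
    apply: eq_bigr => k _; rewrite !mxE /Xidx /Sidx.
    by case/andP: PQ => -> ->; case: (k < r)%N; rewrite /= ?mulr0 ?mul0r ?addr0 ?add0r.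
  apply/esym/big1 => k _; rewrite !mxE /Xidx /Sidx.
  by case: (P i) (Q j) PQ => [] [] //= _; rewrite ?andbF ?mulr0 ?mul0r ?addr0.
by apply: le_trans (l1normD _ _) _; apply: lerD; apply: l1norm_mul.
Qed.

Lemma l1norm_blocks M :
  l1norm M = l1block Xidx Xidx M + l1block Xidx Sidx M + l1block Sidx Xidx M
             + l1block Sidx Sidx M.
Proof.
rewrite /l1block /l1norm -!big_split; apply: eq_bigr => i _; rewrite -!big_split.
apply: eq_bigr => j _; rewrite !mxE /Xidx /Sidx /=.
by case: (i < r)%N; case: (j < r)%N; rewrite /= ?normr0 ?addr0 ?add0r.
Qed.

End Blocks.

Section EntryBounds.
Variable R : realType.
Implicit Types li lj e h p d : R.

Lemma entry_bound_XS li lj e h p d : 0 < d -> d <= li -> lj <= - d ->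
  li * (e - h) + e * (- lj) + p = 0 ->
  d * `|e| <= d * `|h| + `|p| /\ d * `|e - li / (li - lj) * h| <= `|p|.
Proof.
move=> d0 dli ljd eq.
have D0 : 0 < li - lj by lra.
have eE : e = li / (li - lj) * h - p / (li - lj).
  have eD : e * (li - lj) = li * h - p by lra.
  by rewrite -(mulfK (lt0r_neq0 D0) e) eD; field; exact: lt0r_neq0.
have dp : d * (`|p| / (li - lj)) <= `|p|.
  by rewrite mulrA ler_pdivrMr // mulrC ler_wpM2l //; lra.
split; last by rewrite {1}eE addrC addKr normrN normf_div (gtr0_norm D0).
rewrite {1}eE; apply: le_trans (ler_wpM2l (ltW d0) (ler_normB _ _)) _.
rewrite mulrDr normf_div (gtr0_norm D0) lerD // normrM ger0_norm ?divr_ge0 //; try lra.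
by rewrite mulrCA ler_piMl ?mulr_ge0 ?(ltW d0) // ler_pdivrMr // mul1r; lra.
Qed.

Lemma entry_bound_XX li e h p d : 0 < d -> d <= li ->
  li * (e - h) + p = 0 -> d * `|e - h| <= `|p|.
Proof.
move=> d0 dli eq; have li0 : 0 < li by lra.
have -> : e - h = - (p / li).
  by rewrite -(mulfK (lt0r_neq0 li0) (e - h)) -mulNr; congr (_ / _); lra.
by rewrite normrN normf_div (gtr0_norm li0) mulrA ler_pdivrMr // mulrC ler_wpM2l.
Qed.

Lemma entry_bound_SS lj e p d : 0 < d -> lj <= - d ->
  e * (- lj) + p = 0 -> d * `|e| <= `|p|.
Proof.
move=> d0 ljd eq; have lj0 : 0 < - lj by lra.
have -> : e = - p / (- lj).
  by rewrite -(mulfK (lt0r_neq0 lj0) e); congr (_ / _); lra.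
rewrite normf_div normrN (gtr0_norm lj0) mulrA ler_pdivrMr // mulrC ler_wpM2l //; lra.
Qed.

End EntryBounds.

Section BlockEstimate.
Variables (R : realType) (n r : nat) (lam : 'I_n -> R).

(* The spectra of X_⋆ and σ S_⋆. *)
Definition lam_plus (i : 'I_n) := if (i < r)%N then lam i else 0.
Definition lam_minus (i : 'I_n) := if (i < r)%N then 0 else - lam i.

Lemma Omega_sym : (Omega r lam)^T = Omega r lam.
Proof. by apply/matrixP => i j; rewrite !mxE; case: (i < r)%N; case: (j < r)%N. Qed.

Variable del : R.
Hypothesis del0 : 0 < del.
Hypothesis lamX : forall i, Xidx r i -> del <= lam i.
Hypothesis lamS : forall i, Sidx r i -> lam i <= - del.

(* E and H stand for Qᵀ (Π(Z) - X_⋆) Q and Qᵀ (Z - Z_⋆) Q, and compl is the entrywise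
   form of (Λ₊ + E)(Λ₋ + E - H) = 0. *)
Variables (E H : 'M[R]_n) (eta : R).
Hypotheses (sE : E^T = E) (sH : H^T = H).
Hypothesis compl : forall i j,
  lam_plus i * (E - H) i j + E i j * lam_minus j + (E *m (E - H)) i j = 0.
Hypotheses (lE : l1norm E <= eta) (lH : l1norm H <= eta).
Hypothesis eta_small : 6 * eta <= del.

Local Notation LXX := (l1block (Xidx r) (Xidx r)).
Local Notation LXS := (l1block (Xidx r) (Sidx r)).
Local Notation LSX := (l1block (Sidx r) (Xidx r)).
Local Notation LSS := (l1block (Sidx r) (Sidx r)).
Let F := E - H.
Let P := E *m F.
Let W := E - map2_mx *%R (Omega r lam) H.
Let o := LSX H.

Let eF i j : F i j = E i j - H i j.
Proof. by rewrite !mxE. Qed.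

Let eW i j : W i j = E i j - Omega r lam i j * H i j.
Proof. by rewrite !mxE. Qed.

Let o_ge0 : 0 <= o. Proof. exact: l1block_ge0. Qed.
Let o_le_eta : o <= eta. Proof. exact: le_trans (l1block_le _ _ _) lH. Qed.
Let eta_ge0 : 0 <= eta. Proof. exact: le_trans o_ge0 o_le_eta. Qed.
Let LXS_H : LXS H = o. Proof. by rewrite -l1block_tr sH. Qed.
Let LSX_E : LSX E = LXS E. Proof. by rewrite -l1block_tr sE. Qed.

Lemma compl_XS_E : del * LXS E <= del * LXS H + LXS P.
Proof.
rewrite -[LXS P]mul1r; apply: l1block_weighted; rewrite ?ler01 ?(ltW del0) // => i j Xi Sj.
have := compl i j; rewrite -/F -/P eF /lam_plus /lam_minus.
move: (Xi) (Sj); rewrite /Xidx /Sidx => -> /negbTE -> eq.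
by rewrite mul1r; case: (entry_bound_XS del0 (lamX Xi) (lamS Sj) eq).
Qed.

Lemma compl_XS_W : del * LXS W <= LXS P.
Proof.
apply: l1block_scaled; rewrite ?(ltW del0) // => i j Xi Sj.
have := compl i j; rewrite -/F -/P eF eW /lam_plus /lam_minus [Omega r lam i j]mxE.
move: (Xi) (Sj); rewrite /Xidx /Sidx => -> /negbTE -> eq.
by case: (entry_bound_XS del0 (lamX Xi) (lamS Sj) eq).
Qed.

Lemma compl_XX_W : del * LXX W <= LXX P.
Proof.
apply: l1block_scaled; rewrite ?(ltW del0) // => i j Xi Xj.
have := compl i j; rewrite -/F -/P eF eW /lam_plus /lam_minus [Omega r lam i j]mxE.
move: (Xi) (Xj); rewrite /Xidx => -> -> eq; rewrite mul1r.
by apply: entry_bound_XX del0 (lamX Xi) _; rewrite -eq mulr0 addr0.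
Qed.

Lemma compl_SS_W : del * LSS W <= LSS P.
Proof.
apply: l1block_scaled; rewrite ?(ltW del0) // => i j Si Sj.
have := compl i j; rewrite -/F -/P eF eW /lam_plus /lam_minus [Omega r lam i j]mxE.
move: (Si) (Sj); rewrite /Sidx => /negbTE -> /negbTE -> eq; rewrite mul0r subr0.
by apply: entry_bound_SS del0 (lamS Sj) _; rewrite -eq mul0r add0r.
Qed.

Let F_sym : F^T = F. Proof. by rewrite /F linearB /= sE sH. Qed.

Let W_sym : W^T = W.
Proof.
apply/matrixP => i j; rewrite mxE !eW -[in RHS]sE -[in RHS]sH -[in RHS]Omega_sym.
by rewrite !mxE.
Qed.

Let LXS_F : LXS F <= LXS E + o. Proof. by rewrite -LXS_H; exact: l1blockB. Qed.
Let LSX_F : LSX F <= LXS E + o. Proof. by rewrite -l1block_tr F_sym. Qed.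

Let LSS_F : LSS F <= 2 * eta.
Proof.
apply: le_trans (l1blockB _ _ _ _) _; rewrite mulr2n mulrDl mul1r.
by apply: lerD; apply: le_trans (l1block_le _ _ _) _.
Qed.

Let LXX_E : LXX E <= eta. Proof. exact: le_trans (l1block_le _ _ _) lE. Qed.
Let d6 : 0 <= del - 6 * eta. Proof. by rewrite subr_ge0. Qed.

Lemma l1block_XS_E : LXS E <= 3 * o.
Proof.
set a := LXS E; have a0 : 0 <= a := l1block_ge0 _ _ _.
have LP : LXS P <= eta * (a + o) + a * (2 * eta).
  apply: le_trans (@l1block_mul _ _ r _ _ _ _) _.
  by apply: lerD; apply: ler_pM; rewrite ?l1block_ge0 ?LXX_E ?LXS_F ?LSS_F.
have := compl_XS_E; rewrite LXS_H -/a => h.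
suff : del * (a - 3 * o) <= 0 by rewrite pmulr_rle0 // subr_le0.
have := mulr_ge0 d6 a0; have := mulr_ge0 d6 o_ge0; have := mulr_ge0 (ltW del0) o_ge0.
lra.
Qed.

Let o_sq : o * o <= eta * o. Proof. exact: ler_wpM2r. Qed.

Lemma l1block_XS_P : LXS P <= 10 * eta * o.
Proof.
apply: le_trans (@l1block_mul _ _ r _ _ _ _) _.
have := l1block_XS_E; have := LXS_F => LF LE.
have LXS_F' : LXS F <= 4 * o by lra.
apply: le_trans (_ : _ <= eta * (4 * o) + (3 * o) * (2 * eta)) _.
  by apply: lerD; apply: ler_pM; rewrite ?l1block_ge0.
lra.
Qed.

Let LXX_W : LXX W = LXX F.
Proof.
apply: eq_l1block => i j Xi Xj; rewrite eW eF mxE.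
by move: Xi Xj; rewrite /Xidx => -> ->; rewrite mul1r.
Qed.

Let LSS_W : LSS W = LSS E.
Proof.
apply: eq_l1block => i j Si Sj; rewrite eW mxE.
by move: Si Sj; rewrite /Sidx => /negbTE -> /negbTE ->; rewrite mul0r subr0.
Qed.

Lemma l1block_XX_F : del * LXX F <= 15 * eta * o.
Proof.
have LP : LXX P <= eta * LXX F + (3 * o) * (4 * o).
  apply: le_trans (@l1block_mul _ _ r _ _ _ _) _; apply: lerD.
    by apply: ler_wpM2r; rewrite ?l1block_ge0.
  by apply: ler_pM; rewrite ?l1block_ge0 //; have := l1block_XS_E; have := LSX_F; lra.
have := compl_XX_W; rewrite LXX_W => h.
have := mulr_ge0 d6 (l1block_ge0 (Xidx r) (Xidx r) F).
have := mulr_ge0 eta_ge0 o_ge0; have := o_sq; lra.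
Qed.

Lemma l1block_SS_E : del * LSS E <= 18 * eta * o.
Proof.
have LP : LSS P <= (3 * o) * (4 * o) + LSS E * (2 * eta).
  apply: le_trans (@l1block_mul _ _ r _ _ _ _) _; apply: lerD.
    rewrite LSX_E; apply: ler_pM; rewrite ?l1block_ge0 ?l1block_XS_E //.
    by have := l1block_XS_E; have := LXS_F; lra.
  by apply: ler_wpM2l; rewrite ?l1block_ge0.
have := compl_SS_W; rewrite LSS_W => h.
have := mulr_ge0 d6 (l1block_ge0 (Sidx r) (Sidx r) E).
have := mulr_ge0 eta_ge0 o_ge0; have := o_sq; lra.
Qed.

Theorem linearization_error_l1 : del * l1norm W <= 53 * eta * o.
Proof.
rewrite (l1norm_blocks r) LXX_W LSS_W -[LSX W]l1block_tr W_sym.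
have := l1block_XX_F; have := l1block_SS_E; have := compl_XS_W; have := l1block_XS_P.
lra.
Qed.

End BlockEstimate.

(** * The ADMM map *)

Section Symmetric.
Variables (R : realType) (n : nat).
Implicit Types A B : 'M[R]_n.

Lemma symmxD A B : symmx A -> symmx B -> symmx (A + B).
Proof. by rewrite /symmx linearD /= => -> ->. Qed.

Lemma symmxZ (a : R) A : symmx A -> symmx (a *: A).
Proof. by rewrite /symmx linearZ /= => ->. Qed.

Lemma symmxB A B : symmx A -> symmx B -> symmx (A - B).
Proof. by move=> sA sB; rewrite -scaleN1r; apply: symmxD => //; apply: symmxZ. Qed.

Lemma symmx_opAadj m (As : 'I_m -> 'M[R]_n) y :
  (forall i, symmx (As i)) -> symmx (opAadj As y).
Proof.
move=> sAs; rewrite /symmx /opAadj linear_sum /=; apply: eq_bigr => i _.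
by rewrite linearZ /= sAs.
Qed.

Lemma symmx_admm_step m (As : 'I_m -> 'M[R]_n) b C sigma Z :
  symmx C -> (forall i, symmx (As i)) -> symmx (admm_step As b C sigma Z).
Proof.
move=> sC sAs; rewrite /admm_step /projP.
apply: symmxB; last exact: symmxZ.
apply: symmxD; last by apply: symmxZ; exact: symmx_opAadj.
apply: symmxD; last exact: symmx_opAadj.
by apply: symmxD; [exact: symmx_opAadj | exact: proj_psd_sym].
Qed.

Lemma admm_iterates_sym m (As : 'I_m -> 'M[R]_n) b C sigma (Z : nat -> 'M[R]_n) :
  symmx C -> (forall i, symmx (As i)) -> symmx (Z 0%N) ->
  (forall k, Z k.+1 = admm_step As b C sigma (Z k)) -> forall k, symmx (Z k).
Proof. by move=> sC sAs sZ0 step [|k] //; rewrite step; exact: symmx_admm_step. Qed.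

End Symmetric.

Lemma l1norm_linear_bound (R : realType) (p q s t : nat)
    (f : {linear 'M[R]_(p, q) -> 'M[R]_(s, t)}) :
  exists2 K, 0 <= K & forall M, l1norm (f M) <= K * l1norm M.
Proof.
exists (\sum_k \sum_l l1norm (f (delta_mx k l))).
  by apply: sumr_ge0 => k _; apply: sumr_ge0 => l _; exact: l1norm_ge0.
move=> M; rewrite {1}(matrix_sum_delta M) linear_sum /=.
apply: le_trans (l1norm_sum _) _; rewrite mulr_suml; apply: ler_sum => k _.
rewrite linear_sum /=; apply: le_trans (l1norm_sum _) _.
rewrite mulr_suml; apply: ler_sum => l _.
by rewrite linearZ l1normZ mulrC ler_wpM2l ?l1norm_ge0 ?l1norm_entry.
Qed.

Section SDPLinearMaps.
Variables (R : realType) (n m : nat) (As : 'I_m -> 'M[R]_n).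

Lemma opA_is_linear : linear (opA As).
Proof.
by move=> a M N; apply/matrixP => i j; rewrite !mxE /trip mulmxDr -scalemxAr mxtraceD mxtraceZ.
Qed.

Lemma opAadj_is_linear : linear (opAadj As).
Proof.
move=> a y z; rewrite /opAadj scaler_sumr -big_split; apply: eq_bigr => i _.
by rewrite !mxE scalerDl scalerA.
Qed.

End SDPLinearMaps.

HB.instance Definition _ (R : realType) (n m : nat) (As : 'I_m -> 'M[R]_n) :=
  GRing.isLinear.Build R 'M[R]_n 'cV[R]_m *:%R (opA As) (opA_is_linear As).
HB.instance Definition _ (R : realType) (n m : nat) (As : 'I_m -> 'M[R]_n) :=
  GRing.isLinear.Build R 'cV[R]_m 'M[R]_n *:%R (opAadj As) (opAadj_is_linear As).

Lemma projP_is_linear (R : realType) (n m : nat) (As : 'I_m -> 'M[R]_n) :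
  linear (projP As).
Proof. by move=> a M N; rewrite /projP !linearP. Qed.

HB.instance Definition _ (R : realType) (n m : nat) (As : 'I_m -> 'M[R]_n) :=
  GRing.isLinear.Build R 'M[R]_n 'M[R]_n *:%R (projP As) (projP_is_linear As).

Lemma fro_reflect_projP (R : realType) (n m : nat) (As : 'I_m -> 'M[R]_n) :
  exists2 K : R, 0 <= K & forall W, fro (W - 2%:R *: projP As W) <= K * l1norm W.
Proof.
have [K K0 projP_le] := l1norm_linear_bound (projP As).
exists (1 + 2 * K) => [|W]; first by rewrite addr_ge0 ?mulr_ge0.
apply: le_trans (fro_le_l1norm _) _; apply: le_trans (l1normB _ _) _.
by rewrite l1normZ ger0_norm // [leRHS]mulrDl mul1r lerD2l -mulrA ler_pM2l //; exact: projP_le.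
Qed.

(** * The local estimate *)

Lemma exists_gap (R : realType) (n : nat) (lam : 'I_n -> R) :
  (forall i, lam i != 0) -> exists2 del, 0 < del & forall i, del <= `|lam i|.
Proof.
move=> lam0; pose s := \sum_i `|lam i|^-1.
have s0 : 0 <= s by apply: sumr_ge0 => i _; rewrite invr_ge0.
exists (1 + s)^-1; first by rewrite invr_gt0; lra.
move=> i; rewrite -[(1 + s)^-1]mul1r ler_pdivrMr; last lra.
have li0 : 0 < `|lam i| by rewrite normr_gt0.
have si : `|lam i|^-1 <= s.
  by rewrite /s (bigD1 i) //= lerDl; apply: sumr_ge0 => j _; rewrite invr_ge0.
have := ler_wpM2l (ltW li0) si; rewrite mulfV ?lt0r_neq0 //; nra.
Qed.

Lemma exists_spectral_gap (R : realType) (n r : nat) (lam : 'I_n -> R) :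
  (forall i : 'I_n, (i < r)%N -> 0 < lam i) -> (forall i : 'I_n, (r <= i)%N -> lam i < 0) ->
  exists2 del, 0 < del &
    (forall i, Xidx r i -> del <= lam i) /\ (forall i, Sidx r i -> lam i <= - del).
Proof.
move=> lam_pos lam_neg; have [|del del0 gap] := @exists_gap _ _ lam.
  by move=> i; case: (ltnP i r) => [/lam_pos/lt0r_neq0|/lam_neg/ltr0_neq0].
exists del => //; split=> i; first by move=> /lam_pos li; rewrite -(gtr0_norm li).
by rewrite /Sidx -leqNgt => /lam_neg li; rewrite lerNr -(ltr0_norm li).
Qed.

Lemma diag_compl_entry (R : realType) (n : nat) (dp dn : 'I_n -> R) (E F : 'M[R]_n) :
  (forall i, dp i * dn i = 0) ->
  (diag_mx (\row_i dp i) + E) *m (diag_mx (\row_i dn i) + F) = 0 ->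
  forall i j, dp i * F i j + E i j * dn j + (E *m F) i j = 0.
Proof.
move=> dpn0 key i j; move: key; rewrite mulmxDl !mulmxDr !mul_diag_mx mul_mx_diag.
move: (E *m F) => P /matrixP /(_ i j); rewrite !mxE mulrnAr dpn0 mul0rn add0r => <-.
by rewrite addrA.
Qed.

Section LocalEstimate.
Variables (R : realType) (n r : nat) (Q : 'M[R]_n) (lam : 'I_n -> R) (del : R).
Hypotheses (QtQ : Q^T *m Q = 1%:M) (QQt : Q *m Q^T = 1%:M).
Hypothesis del0 : 0 < del.
Hypothesis lamX : forall i, Xidx r i -> del <= lam i.
Hypothesis lamS : forall i, Sidx r i -> lam i <= - del.

Let Zs := Q *m diag_mx (\row_i lam i) *m Q^T.
Let Dp := diag_mx (\row_i lam_plus r lam i).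
Let Dn := diag_mx (\row_i lam_minus r lam i).
Let rot (M : 'M[R]_n) := Q^T *m M *m Q.
Let rotE Z := rot (proj_psd Z - proj_psd Zs).
Let rotH Z := rot (Z - Zs).
Let c := l1norm Q * l1norm Q * (n * n)%:R.

Let lam_plus_minus i : lam_plus r lam i * lam_minus r lam i = 0.
Proof. by rewrite /lam_plus /lam_minus; case: ifP; rewrite ?mulr0 ?mul0r. Qed.

Let Zs_split : Zs = Q *m diag_mx (\row_i (lam_plus r lam i - lam_minus r lam i)) *m Q^T.
Proof.
congr (_ *m diag_mx _ *m _); apply/rowP => i; rewrite !mxE /lam_plus /lam_minus.
by case: ifP; rewrite ?subr0 ?sub0r ?opprK.
Qed.

Lemma proj_psd_Zs : proj_psd Zs = Q *m Dp *m Q^T.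
Proof.
rewrite Zs_split; apply: (proj_psd_spectral QtQ _ _ lam_plus_minus) => i.
  rewrite /lam_plus; case: ifP => // /lamX; apply: le_trans; exact: ltW.
rewrite /lam_minus; case: ifP => // /negbT /lamS; rewrite oppr_ge0 => /le_trans.
by apply; rewrite lerNl oppr0 ltW.
Qed.

Lemma rotated_compl Z : symmx Z -> forall i j,
  lam_plus r lam i * (rotE Z - rotH Z) i j + rotE Z i j * lam_minus r lam j
  + (rotE Z *m (rotE Z - rotH Z)) i j = 0.
Proof.
move=> sZ; apply: (diag_compl_entry lam_plus_minus).
have rotB A B : rot (A - B) = rot A - rot B by rewrite /rot mulmxBr mulmxBl.
have rot_projZs : rot (proj_psd Zs) = Dp by rewrite proj_psd_Zs /rot conjmxK.
have rotZs : rot Zs = Dp - Dn.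
  rewrite Zs_split /rot conjmxK // /Dp /Dn -linearB /=; congr diag_mx.
  by apply/rowP => i; rewrite !mxE.
rewrite /rotE /rotH -/Dp -/Dn !rotB rot_projZs rotZs addrC subrK.
have -> : Dn + (rot (proj_psd Z) - Dp - (rot Z - (Dp - Dn))) = rot (proj_psd Z - Z).
  by rewrite rotB; apply/matrixP => i j; rewrite !mxE; ring.
rewrite /rot !mulmxA -[_ *m Q *m Q^T]mulmxA QQt mulmx1 -(mulmxA Q^T).
by rewrite proj_psd_compl // mulmx0 mul0mx.
Qed.

Lemma l1block_SX_rot M : l1block (Sidx r) (Xidx r) (rot M) <= (n * n)%:R * fro_HO r Q M.
Proof.
apply: l1norm_le_entry_bound => i j; rewrite mxE.
case: ifP => [/andP[Si Xj]|_]; last by rewrite normr0 sqrtr_ge0.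
have sums_ge0 (P1 P2 : pred 'I_n) (F : 'I_n -> 'I_n -> R) :
    0 <= \sum_(k | P1 k) \sum_(l | P2 l) F k l ^+ 2.
  by apply: sumr_ge0 => k _; apply: sumr_ge0 => l _; exact: sqr_ge0.
rewrite /fro_HO -sqrtr_sqr ler_sqrt; last exact: sums_ge0.
rewrite (bigD1 i) /=; last by rewrite leqNgt.
rewrite (bigD1 j Xj) /= -addrA lerDl; apply: addr_ge0; last exact: sums_ge0.
by apply: sumr_ge0 => l _; exact: sqr_ge0.
Qed.

Lemma l1norm_rot M : l1norm (rot M) <= c * fro M.
Proof.
apply: le_trans (l1norm_mul3 _ _ _) _; rewrite l1norm_tr.
have -> : c * fro M = l1norm Q * ((n * n)%:R * fro M) * l1norm Q by rewrite /c; ring.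
by rewrite ler_wpM2r ?l1norm_ge0 // ler_wpM2l ?l1norm_ge0 ?l1norm_le_fro.
Qed.

Lemma rotated_error Z : symmx Z -> 6 * (c * fro (Z - Zs)) <= del ->
  del * l1norm (rotE Z - map2_mx *%R (Omega r lam) (rotH Z))
    <= 53 * (c * fro (Z - Zs)) * ((n * n)%:R * fro_HO r Q (Z - Zs)).
Proof.
move=> sZ small; have c0 : 0 <= c by rewrite !mulr_ge0 ?l1norm_ge0.
have lE : l1norm (rotE Z) <= c * fro (Z - Zs).
  apply: le_trans (l1norm_rot _) _; rewrite ler_wpM2l //.
  exact: proj_psd_nonexpansive.
have sym_rot M : symmx M -> (rot M)^T = rot M.
  by move=> sM; rewrite /rot !trmx_mul trmxK sM mulmxA.
have sE : (rotE Z)^T = rotE Z by apply/sym_rot/symmxB; exact: proj_psd_sym.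
have sH : (rotH Z)^T = rotH Z.
  by apply/sym_rot/symmxB => //; rewrite /symmx !trmx_mul trmxK tr_diag_mx mulmxA.
apply: le_trans (linearization_error_l1 del0 lamX lamS sE sH (rotated_compl sZ) lE
  (l1norm_rot _) small) _.
apply: ler_wpM2l; first exact: mulr_ge0 (ler0n _ 53) (mulr_ge0 c0 (sqrtr_ge0 _)).
exact: l1block_SX_rot.
Qed.

Lemma linearization_error_local : exists2 eps : R, 0 < eps & exists2 alpha : R, 0 <= alpha &
  forall Z, symmx Z -> fro (Z - Zs) < eps ->
  l1norm (proj_psd Z - proj_psd Zs - calD r Q lam (Z - Zs))
    <= alpha * fro_HO r Q (Z - Zs) * fro (Z - Zs).
Proof.
pose q := l1norm Q; have q0 : 0 <= q := l1norm_ge0 Q.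
have c0 : 0 <= c by rewrite !mulr_ge0.
have c1 : 0 < 6 * (c + 1) by rewrite mulr_gt0 // ltr_wpDl.
exists (del / (6 * (c + 1))); first exact: divr_gt0.
pose alpha := q * q * (53 * c * (n * n)%:R / del).
exists alpha => [|Z sZ h_small]; first by rewrite !mulr_ge0 ?invr_ge0 ?(ltW del0).
have small : 6 * (c * fro (Z - Zs)) <= del.
  apply: le_trans (ltW (_ : fro (Z - Zs) * (6 * (c + 1)) < del)); last first.
    by rewrite -ltr_pdivlMr.
  have -> : 6 * (c * fro (Z - Zs)) = fro (Z - Zs) * (6 * c) by ring.
  by rewrite ler_wpM2l ?sqrtr_ge0 // ler_wpM2l // lerDl.
have -> : proj_psd Z - proj_psd Zs - calD r Q lam (Z - Zs)
    = Q *m (rotE Z - map2_mx *%R (Omega r lam) (rotH Z)) *m Q^T.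
  by rewrite mulmxBr mulmxBl /rotE /rot conjmxK.
apply: le_trans (l1norm_mul3 _ _ _) _; rewrite l1norm_tr -/q mulrAC.
have -> : alpha * fro_HO r Q (Z - Zs) * fro (Z - Zs) = q * q *
    ((53 * (c * fro (Z - Zs)) * ((n * n)%:R * fro_HO r Q (Z - Zs))) / del).
  by rewrite /alpha; field; exact: lt0r_neq0.
rewrite ler_wpM2l ?mulr_ge0 // ler_pdivlMr // mulrC.
exact: rotated_error.
Qed.

End LocalEstimate.

Theorem proposition2 (R : realType) (n m : nat)
  (C : 'M[R]_n) (As : 'I_m -> 'M[R]_n) (b : 'cV[R]_m) (sigma : R)
  (Z : nat -> 'M[R]_n)
  (Xs : 'M[R]_n) (ys : 'cV[R]_m) (Ss : 'M[R]_n)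
  (Q : 'M[R]_n) (lam : 'I_n -> R) :
  symmx C ->
  (forall i, symmx (As i)) ->
  surjective_opA As ->
  0 < sigma ->
  symmx (Z 0%N) ->
  (forall k, Z k.+1 = admm_step As b C sigma (Z k)) ->
  KKT As b C Xs ys Ss ->
  (\rank Xs + \rank Ss)%N = n ->
  (* Z^(k) -> Z_star := X_star - sigma S_star *)
  (forall e : R, 0 < e -> exists N : nat, forall k, (N <= k)%N ->
      fro (Z k - (Xs - sigma *: Ss)) < e) ->
  (* spectral decomposition of Z_star *)
  Q^T *m Q = 1%:M -> Q *m Q^T = 1%:M ->
  Xs - sigma *: Ss = Q *m diag_mx (\row_i lam i) *m Q^T ->
  (forall i j : 'I_n, (i <= j)%N -> lam j <= lam i) ->
  (forall i : 'I_n, (i < \rank Xs)%N -> 0 < lam i) ->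
  (forall i : 'I_n, (\rank Xs <= i)%N -> lam i < 0) ->
  exists kbar : nat, exists alpha : R, 0 < alpha /\
    forall k : nat, (kbar <= k)%N ->
      fro (Psi (\rank Xs) As Q lam (Xs - sigma *: Ss) (Z k))
      <= alpha * fro_HO (\rank Xs) Q (Z k - (Xs - sigma *: Ss))
               * fro (Z k - (Xs - sigma *: Ss)).
Proof.
move=> sC sAs _ _ sZ0 step _ _ conv QtQ QQt dec _ lam_pos lam_neg.
rewrite dec in conv *; set r := \rank Xs in lam_pos lam_neg *.
have [del del0 [lamX lamS]] := exists_spectral_gap lam_pos lam_neg.
have [eps eps0 [c c0 local]] := linearization_error_local QtQ QQt del0 lamX lamS.
have [K K0 Psi_le] := fro_reflect_projP As.
have [N N_conv] := conv eps eps0.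
exists N, (K * c + 1); split=> [|k kN]; first exact: ltr_wpDl (mulr_ge0 K0 c0) ltr01.
have symZ := admm_iterates_sym sC sAs sZ0 step.
apply: le_trans (Psi_le _) _.
apply: le_trans (ler_wpM2l K0 (local (Z k) (symZ k) (N_conv k kN))) _.
by rewrite !mulrA ler_wpM2r ?sqrtr_ge0 // ler_wpM2r ?sqrtr_ge0 // lerDl.
Qed.
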